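(* Let $(\mathfrak g,D)$ be a difference Lie algebra over $\mathbb R$ and let $\hat\omega:\wedge^2\mathfrak g\to\mathfrak g$, $\hat D:\mathfrak g\to\mathfrak g$ be linear maps generating an infinitesimal deformation of $(\mathfrak g,D)$. Then $(\hat\omega,\hat D)$ is a 2-cocycle: $\bar\delta(\hat\omega,\hat D)=0$, i.e. $d^{CE}_{\mathrm{ad}}\hat\omega=0$ and $d^{CE}_{\mathrm{ad}_D}\hat D+T(\hat\omega)=0$.
   Context: A difference Lie algebra $(\mathfrak g,D)$: a Lie algebra $\mathfrak g$ with linear $D$ satisfying $D[x,y]=[x,D(y)]-[y,D(x)]+[D(x),D(y)]$. $\mathbb R[t]/(t^2)\otimes\mathfrak g$ carries the $\mathbb R[t]/(t^2)$-bilinear extension of the bracket and the $\mathbb R[t]/(t^2)$-linear extension of $D$. $(\hat\omega,\hat D)$ generates an infinitesimal deformation if $[\cdot,\cdot]_t=[\cdot,\cdot]+t\hat\omega$ is a Lie bracket on $\mathbb R[t]/(t^2)\otimes\mathfrak g$ and $D_t=D+t\hat D$ is a difference operator for $[\cdot,\cdot]_t$, i.e. $D_t[x,y]_t=[D_t x,y]_t+[x,D_ty]_t+[D_tx,D_ty]_t$. $d^{CE}_{\mathrm{ad}}$ is the Chevalley–Eilenberg differential with coefficients in the adjoint representation, $d^{CE}_{\mathrm{ad}_D}$ that with coefficients in $\mathrm{ad}_D(x)u=[x,u]+[D(x),u]$; for $f\in\mathrm{Hom}(\wedge^n\mathfrak g,\mathfrak g)$, $T(f)(x_1,\dots,x_n)=(-1)^n\big(\sum_{k=1}^n\sum_{1\le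 i_1<\cdots<i_k\le n}f(y_1,\dots,y_n)-D(f(x_1,\dots,x_n))\big)$, $y_j=D(x_j)$ for $j\in\{i_1,\dots,i_k\}$ and $y_j=x_j$ otherwise. The cochains are $C^n(\mathfrak g,D)=\mathrm{Hom}(\wedge^n\mathfrak g,\mathfrak g)\oplus\mathrm{Hom}(\wedge^{n-1}\mathfrak g,\mathfrak g)$ ($n\ge2$), $C^1=\mathrm{Hom}(\mathfrak g,\mathfrak g)$, with $\bar\delta(f,\theta)=(d^{CE}_{\mathrm{ad}}f,d^{CE}_{\mathrm{ad}_D}\theta+T(f))$. *)

From HB Require Import structures.
From mathcomp Require Import all_boot all_order all_algebra.
From mathcomp Require Import reals.
Set Implicit Arguments. Unset Strict Implicit. Unset Printing Implicit Defensive.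
Import Order.TTheory GRing.Theory Num.Theory.
Local Open Scope ring_scope.

Section Defs.
Variables (R : realType) (V : lmodType R).

Definition bilinear_map (b : V -> V -> V) : Prop :=
  (forall (a : R) x y z, b (a *: x + y) z = a *: b x z + b y z) /\
  (forall (a : R) x y z, b x (a *: y + z) = a *: b x y + b x z).

Definition is_lie_bracket (br : V -> V -> V) : Prop :=
  [/\ bilinear_map br,
      (forall x, br x x = 0) &
      (forall x y z, br x (br y z) + br y (br z x) + br z (br x y) = 0)].

Definition linear_map (f : V -> V) : Prop :=
  forall (a : R) x y, f (a *: x + y) = a *: f x + f y.

(* Elements of wedge^2 g -> g: bilinear alternating maps. *)
Definition alt2 (w : V -> V -> V) : Prop :=
  bilinear_map w /\ (forall x, w x x = 0).

Definition difference_op (br : V -> V -> V) (D : V -> V) : Prop :=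
  forall x y, D (br x y) = br x (D y) - br y (D x) + br (D x) (D y).

Definition difference_lie_algebra (br : V -> V -> V) (D : V -> V) : Prop :=
  [/\ is_lie_bracket br, linear_map D & difference_op br D].

(* R[t]/(t^2) (x) g is modelled as pairs (x0, x1) standing for x0 + t x1.
   The R[t]/(t^2)-bilinear extension of br + t*w, and the
   R[t]/(t^2)-linear extension of D + t*Dh: *)
Definition dual_bracket (br w : V -> V -> V) (u v : V * V) : V * V :=
  (br u.1 v.1, br u.1 v.2 + br u.2 v.1 + w u.1 v.1).

Definition dual_op (D Dh : V -> V) (u : V * V) : V * V :=
  (D u.1, D u.2 + Dh u.1).

(* (w, Dh) generates an infinitesimal deformation of (g, br, D):
   [.,.]_t is a Lie bracket on R[t]/(t^2) (x) g (alternating + Jacobi;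
   R[t]/(t^2)-bilinearity holds by construction) and D_t is a
   difference operator for [.,.]_t, in the form D_t[x,y]_t =
   [D_t x,y]_t + [x,D_t y]_t + [D_t x,D_t y]_t. *)
Definition infinitesimal_deformation (br : V -> V -> V) (D : V -> V)
    (w : V -> V -> V) (Dh : V -> V) : Prop :=
  let brt := dual_bracket br w in
  let Dt := dual_op D Dh in
  [/\ (forall u, brt u u = 0),
      (forall u v z, brt u (brt v z) + brt v (brt z u) + brt z (brt u v) = 0) &
      (forall u v, Dt (brt u v) = brt (Dt u) v + brt u (Dt v) + brt (Dt u) (Dt v))].

Definition ad (br : V -> V -> V) : V -> V -> V := fun x u => br x u.
Definition adD (br : V -> V -> V) (D : V -> V) : V -> V -> V :=
  fun x u => br x u + br (D x) u.

Definition dCE1 (br : V -> V -> V) (rho : V -> V -> V) (th : V -> V) : V -> V -> V :=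
  fun x y => rho x (th y) - rho y (th x) - th (br x y).

Definition dCE2 (br : V -> V -> V) (rho : V -> V -> V) (f : V -> V -> V)
  : V -> V -> V -> V :=
  fun x y z => rho x (f y z) - rho y (f x z) + rho z (f x y)
               - f (br x y) z + f (br x z) y - f (br y z) x.

(* T(f) for f in Hom(wedge^2 g, g): (-1)^2 (sum over nonempty subsets
   replacing x_j by D x_j, minus D(f(x1,x2))). *)
Definition T2 (D : V -> V) (f : V -> V -> V) : V -> V -> V :=
  fun x y => f (D x) y + f x (D y) + f (D x) (D y) - D (f x y).

End Defs.

(* Evaluate the deformed structure of R[t]/(t^2) (x) g on elements of g itself,
   i.e. on pairs (x, 0).  Up to antisymmetry of [br] and [w], the t-coefficient
   of the Jacobi identity for [.,.]_t is then exactly d_ad w, and the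
   t-coefficient of the difference condition for D_t is exactly
   d_adD Dh + T(w); so both vanish. *)
From HB Require Import structures.
From mathcomp Require Import all_boot all_order all_algebra.
From mathcomp Require Import reals.
Set Implicit Arguments. Unset Strict Implicit. Unset Printing Implicit Defensive.
Import Order.TTheory GRing.Theory Num.Theory.
Local Open Scope ring_scope.

Section BilinearMap.
Variables (R : realType) (V : lmodType R) (b : V -> V -> V).
Hypothesis b_bilinear : bilinear_map b.

Lemma bilinear_mapDl x y z : b (x + y) z = b x z + b y z.
Proof. by have := b_bilinear.1 1 x y z; rewrite !scale1r. Qed.

Lemma bilinear_mapDr x y z : b x (y + z) = b x y + b x z.
Proof. by have := b_bilinear.2 1 x y z; rewrite !scale1r. Qed.

Lemma bilinear_map0l x : b 0 x = 0.
Proof. by apply: (@addrI _ (b 0 x)); rewrite -bilinear_mapDl !addr0. Qed.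

Lemma bilinear_map0r x : b x 0 = 0.
Proof. by apply: (@addrI _ (b x 0)); rewrite -bilinear_mapDr !addr0. Qed.

Lemma bilinear_mapNr x y : b x (- y) = - b x y.
Proof. by have := b_bilinear.2 (-1) x y 0; rewrite !addr0 bilinear_map0r addr0 !scaleN1r. Qed.

Hypothesis b_alternating : forall x, b x x = 0.

Lemma alternating_skew x y : b x y = - b y x.
Proof.
apply/eqP; rewrite -addr_eq0 eq_sym -(b_alternating (x + y)).
by rewrite bilinear_mapDl !bilinear_mapDr !b_alternating add0r addr0 addrC.
Qed.

End BilinearMap.

Lemma linear_map0 (R : realType) (V : lmodType R) (f : V -> V) :
  linear_map f -> f 0 = 0.
Proof.
move=> f_lin; have := f_lin 1 0 0; rewrite !scale1r addr0 => f0D.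
by apply: (@addrI _ (f 0)); rewrite -f0D addr0.
Qed.

Section InfinitesimalDeformation.
Variables (R : realType) (V : lmodType R) (br w : V -> V -> V) (D Dh : V -> V).
Hypotheses (br_bilinear : bilinear_map br) (br_alternating : forall x, br x x = 0).
Hypotheses (w_alt2 : alt2 w) (D_linear : linear_map D).

Local Notation brt := (dual_bracket br w).
Local Notation Dt := (dual_op D Dh).

Let br_skew := alternating_skew br_bilinear br_alternating.
Let w_skew := alternating_skew w_alt2.1 w_alt2.2.

Lemma dual_bracket_pure_l x u : brt (x, 0) u = (br x u.1, br x u.2 + w x u.1).
Proof. by rewrite /dual_bracket /= (bilinear_map0l br_bilinear) addr0. Qed.

Lemma dual_bracket_pure_r u y : brt u (y, 0) = (br u.1 y, br u.2 y + w u.1 y).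
Proof. by rewrite /dual_bracket /= (bilinear_map0r br_bilinear) add0r. Qed.

Lemma dual_op_pure x : Dt (x, 0) = (D x, Dh x).
Proof. by rewrite /dual_op /= linear_map0 // add0r. Qed.

Lemma dCE2_ad_dual_jacobi x y z :
  dCE2 br (ad br) w x y z =
  (brt (x, 0) (brt (y, 0) (z, 0)) + brt (y, 0) (brt (z, 0) (x, 0))
   + brt (z, 0) (brt (x, 0) (y, 0))).2.
Proof.
rewrite !dual_bracket_pure_l /= !(bilinear_map0r br_bilinear) !add0r /dCE2 /ad.
rewrite [w x z]w_skew [w (br x y) z]w_skew [w (br x z) y]w_skew [br x z]br_skew.
rewrite [w (br y z) x]w_skew !(bilinear_mapNr br_bilinear) !(bilinear_mapNr w_alt2.1) !opprK.
by rewrite [LHS](ACl ((1*6)*(2*5)*(3*4))).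
Qed.

Lemma dCE1_adD_T2_dual_difference x y :
  dCE1 br (adD br D) Dh x y + T2 D w x y =
  (brt (Dt (x, 0)) (y, 0) + brt (x, 0) (Dt (y, 0)) + brt (Dt (x, 0)) (Dt (y, 0))).2
  - (Dt (brt (x, 0) (y, 0))).2.
Proof.
rewrite !dual_op_pure !dual_bracket_pure_l dual_bracket_pure_r /=.
rewrite (bilinear_map0r br_bilinear) add0r.
rewrite /dCE1 /adD /T2 [br y (Dh x)]br_skew [br (D y) (Dh x)]br_skew !opprD !opprK.
by rewrite !addrA [LHS](ACl (3*6*1*7*2*4*8*9*5)).
Qed.

End InfinitesimalDeformation.

Theorem theorem4p4 (R : realType) (V : lmodType R)
    (br : V -> V -> V) (D : V -> V) (w : V -> V -> V) (Dh : V -> V) :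
  difference_lie_algebra br D ->
  alt2 w -> linear_map Dh ->
  infinitesimal_deformation br D w Dh ->
  (forall x y z, dCE2 br (ad br) w x y z = 0) /\
  (forall x y, dCE1 br (adD br D) Dh x y + T2 D w x y = 0).
Proof.
move=> [[br_bilinear br_alternating _] D_linear _] w_alt2 _ [_ jacobi_t difference_t].
split=> [x y z | x y].
  by rewrite (dCE2_ad_dual_jacobi br_bilinear br_alternating w_alt2) jacobi_t.
rewrite (dCE1_adD_T2_dual_difference w Dh br_bilinear br_alternating D_linear).
by rewrite difference_t subrr.
Qed.
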